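(* Let $G$ be an acyclic ADT network with a multicast connection $\mathcal C=\{(S,T_1,\mathcal X(S)),\dots,(S,T_N,\mathcal X(S))\}$. Let $\mathcal F$ be the set of all link-failure patterns $f$ for which $(G_f,\mathcal C)$ is solvable. Then there is a single fixed (static) linear network code that solves $(G_f,\mathcal C)$ simultaneously for every $f\in\mathcal F$, i.e. it achieves the multicast rate whatever failure $f\in\mathcal F$ occurs. Such a code exists over $\mathbb F_q$ whenever $q>|\mathcal F|N$.
   Context: ADT network model. $G=(\mathcal V,\mathcal E)$ is a directed acyclic network of supernodes, each with input ports $I(V)$ and output ports $O(V)$. Edges go from output ports to input ports of other supernodes. Linear coding over a finite field $\mathbb F_q$: - An output port $e\in O(V)$ carries $Y(e)=\sum_{e'\in I(V)}\beta_{(e',e)}Y(e')$. At $S$, the term $\sum_k\alpha_{(k,e)}X(S,k)$ is added. - An output port sends the same symbol on all of its outgoing edges. - An input port $e'$ receives $Y(e')=\sum_{(e,e')\in\mathcal E}Y(e)$, the sum taken over $\mathbb F_q$. - A destination $T$ outputs $Z(T,k)=\sum_{e'\in I(T)}\epsilon_{(e',(T,k))}Y(e')$. A failure pattern $f$ is a set of links of $G$. $G_f$ is the network $G$ with those links deleted, which is equivalent to setting to zero the coding variables associated with the failed links. $(G_f,\mathcal C)$ is solvable if some coefficient choice makes every $T_i$ output exactly $\mathcal X(S)$ in $G_f$. A code solves $(G_f,\mathcal C)$ if, when used unchanged in $G_f$, every $T_i$ can recover $\mathcal X(S)$, i.e. each square system matrix from $\mathcal X(S)$ to $T_i$ in $G_f$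 is nonsingular. *)

From HB Require Import structures.
From mathcomp Require Import all_boot all_order all_algebra.
Set Implicit Arguments. Unset Strict Implicit. Unset Printing Implicit Defensive.
Import GRing.Theory.
Local Open Scope ring_scope.

(* V  : supernodes;  PI : input ports;  PO : output ports.
   inown e' / outown e : the supernode owning an input / output port. *)

Section ADT.
Variables (V PI PO : finType) (inown : PI -> V) (outown : PO -> V).

Definition well_formed_adt (E : {set PO * PI}) : Prop :=
  forall p, p \in E -> outown p.1 != inown p.2.

Definition sn_adj (E : {set PO * PI}) : rel V :=
  fun u v => [exists p in E, (outown p.1 == u) && (inown p.2 == v)].

Definition acyclic_adt (E : {set PO * PI}) : Prop :=
  forall u v, sn_adj E u v -> ~~ connect (sn_adj E) v u.

(* A linear code over F for source rate r and N destinations: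
   alpha k e    = alpha_{(k,e)}          (used only for e in O(S)),
   beta e' e    = beta_{(e',e)}          (used only for e', e at the same supernode),
   eps i e' k   = eps_{(e',(T_i,k))}     (used only for e' in I(T_i)). *)
Record lcode (F : Type) (r N : nat) := LCode {
  alpha : 'I_r -> PO -> F;
  beta  : PI -> PO -> F;
  eps   : 'I_N -> PI -> 'I_r -> F }.

Variables (F : fieldType) (r N : nat) (S : V) (T : 'I_N -> V).

(* Symbols are represented by their coefficient row vectors w.r.t. the
   source symbols X(S,0..r-1).  Ef is the set of links still present. *)

Definition in_sym (Ef : {set PO * PI}) (Yo : PO -> 'rV[F]_r) (e' : PI) : 'rV[F]_r :=
  \sum_(e : PO | (e, e') \in Ef) Yo e.

Definition out_step (c : lcode F r N) (Ef : {set PO * PI}) (Yo : PO -> 'rV[F]_r)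
    (e : PO) : 'rV[F]_r :=
  \sum_(e' : PI | inown e' == outown e) beta c e' e *: in_sym Ef Yo e'
  + (if outown e == S then \row_k alpha c k e else 0).

(* In an acyclic network the recursion stabilises after #|V| rounds. *)
Definition out_sym (c : lcode F r N) (Ef : {set PO * PI}) : PO -> 'rV[F]_r :=
  iter #|V| (out_step c Ef) (fun _ => 0).

Definition dest_out (c : lcode F r N) (Ef : {set PO * PI}) (i : 'I_N) (k : 'I_r)
    : 'rV[F]_r :=
  \sum_(e' : PI | inown e' == T i) eps c i e' k *: in_sym Ef (out_sym c Ef) e'.

Definition sysmx (c : lcode F r N) (Ef : {set PO * PI}) (i : 'I_N) : 'M[F]_r :=
  \matrix_(j, k) dest_out c Ef i k 0 j.

Definition Gf (E f : {set PO * PI}) : {set PO * PI} := E :\: f.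

Definition solvable (E f : {set PO * PI}) : Prop :=
  exists c : lcode F r N, forall i, sysmx c (Gf E f) i = 1%:M.

Definition solves (c : lcode F r N) (E f : {set PO * PI}) : Prop :=
  forall i, sysmx c (Gf E f) i \in unitmx.

End ADT.

(* Changing a single coefficient of a linear code to [t] changes every system matrix
   by [t] times a fixed rank-one matrix, so the determinant of each system matrix
   [M_(f,i)] is an affine function of each coefficient separately.  Solvability of
   [(G_f, C)] makes each of these [#|Fam| * N] determinants non-zero for some code, and
   fewer than [#|F|] multi-affine functions that are each somewhere non-zero have a
   common non-zero point: fixing the coefficients one at a time, each function forbids
   at most one value of the current coefficient. *)

Set Warnings "-notation-overridden,-ambiguous-paths".
From Pilot Require Import Defs.
From HB Require Import structures.
From mathcomp Require Import all_boot all_order all_algebra.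
From mathcomp Require Import ring.
From Stdlib Require Import FunctionalExtensionality.
Set Implicit Arguments. Unset Strict Implicit. Unset Printing Implicit Defensive.
Import GRing.Theory.
Local Open Scope ring_scope.

Definition affine (F : pzRingType) (f : F -> F) := exists a b, forall t, f t = a + t * b.

Lemma affine_eq0 (F : fieldType) (f : F -> F) a b :
  affine f -> a != b -> f a = 0 -> f b = 0 -> forall t, f t = 0.
Proof.
move=> [c [d Hf]] neq_ab; rewrite !Hf => fa0 fb0 t.
have : (a - b) * d = 0.
  by rewrite mulrBl -[a * d](addKr c) fa0 -[b * d](addKr c) fb0 subrr.
move/eqP; rewrite mulf_eq0 subr_eq0 (negbTE neq_ab) /= => /eqP d0.
by move: fa0; rewrite Hf d0 !mulr0 !addr0.
Qed.

Definition rank1_pencil (F : pzRingType) n (A : F -> 'M[F]_n) :=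
  exists (u : 'cV[F]_n) (v : 'rV[F]_n), forall t, A t = A 0 + t *: (u *m v).

Lemma det_add_col_affine (F : comPzRingType) n (A B : 'M[F]_n) j :
  (forall i k, k != j -> B i k = 0) -> affine (fun t => \det (A + t *: B)).
Proof.
move=> B_col.
exists (\sum_i A i j * cofactor A i j), (\sum_i B i j * cofactor A i j) => t.
rewrite (expand_det_col _ j) mulr_sumr -big_split /=; apply: eq_bigr => i _.
have -> : cofactor (A + t *: B) i j = cofactor A i j.
  rewrite /cofactor; congr (_ * _); congr (\det _); apply/matrixP => k l; rewrite !mxE.
  by rewrite B_col ?scaler0 ?mulr0 ?addr0 // eq_sym neq_lift.
by rewrite !mxE; ring.
Qed.

(* The bordered matrix [[1, v], [-t u, A]] has determinant det (A + t u v) and is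
   affine in t through its first column only. *)
Lemma det_rank1_pencil_affine (F : comPzRingType) n (A : F -> 'M[F]_n) :
  rank1_pencil A -> affine (fun t => \det (A t)).
Proof.
move=> [u [v HA]].
pose M t := block_mx (1%:M : 'M[F]_1) v (- (t *: u)) (A 0).
have detM t : \det (A t) = \det (M t).
  have -> : M t = block_mx 1%:M 0 (- (t *: u)) 1%:M *m block_mx 1%:M v 0 (A t).
    rewrite mulmx_block !mul1mx !mul0mx !mulmx1 !addr0 mulNmx -scalemxAl HA /M.
    by congr block_mx; apply/matrixP => i j; rewrite !mxE; ring.
  by rewrite det_mulmx det_lblock det_ublock !det1 !mul1r.
have M_pencil t : M t = M 0 + t *: block_mx 0 0 (- u) 0.
  by rewrite /M scale_block_mx add_block_mx !scaler0 !addr0 scale0r oppr0 add0r scalerN.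
have col0 i k : k != lshift n (ord0 : 'I_1) -> (block_mx 0 0 (- u) 0 : 'M[F]_(1 + n)) i k = 0.
  rewrite -[i]splitK -[k]splitK.
  case: (split i) => i'; case: (split k) => k' /=;
    rewrite ?block_mxEul ?block_mxEur ?block_mxEdl ?block_mxEdr ?mxE //.
  by rewrite (ord1 k') eqxx.
have [a [b Hab]] := det_add_col_affine (M 0) col0.
by exists a, b => t; rewrite detM M_pencil Hab.
Qed.

Lemma big_scale_set (R : pzRingType) (M : lmodType R) (I : finType) (P : pred I)
    (w : I -> R) (Z : I -> M) (i0 : I) (c : bool) t :
  \sum_(i | P i) (if c && (i == i0) then t else w i) *: Z i =
  \sum_(i | P i) (if c && (i == i0) then 0 else w i) *: Z i +
    (if c && P i0 then t *: Z i0 else 0).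
Proof.
case: c => /=; last by rewrite addr0.
have [Pi0 | NPi0] := boolP (P i0).
  rewrite (bigD1 i0) //= [in RHS](bigD1 i0) //= !eqxx scale0r add0r addrC; congr (_ + _).
  by apply: eq_bigr => i /andP[_ /negbTE ->].
rewrite addr0; apply: eq_bigr => i Pi.
by have /negbTE -> : i != i0 by apply: contraNneq NPi0 => <-.
Qed.

Definition ffun_set (X : finType) (T : Type) (th : {ffun X -> T}) (x : X) (t : T)
  : {ffun X -> T} := [ffun v => if v == x then t else th v].

Lemma ffun_set_id (X : finType) (T : Type) (th : {ffun X -> T}) x : ffun_set th x (th x) = th.
Proof. by apply/ffunP => v; rewrite ffunE; case: (eqVneq v x) => // ->. Qed.

Definition multiaffine (X : finType) (F : pzRingType) (g : {ffun X -> F} -> F) :=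
  forall th x, affine (fun t => g (ffun_set th x t)).

Section CommonNonzero.
Variables (X : finType) (F : finFieldType).

Definition agree_off (s : seq X) (th th' : {ffun X -> F}) :=
  [forall v, (v \notin s) ==> (th v == th' v)].

Lemma agree_off_set x s th th0 t :
  agree_off (x :: s) th th0 -> agree_off s (ffun_set th x t) (ffun_set th0 x t).
Proof.
move=> /forallP agr; apply/forallP => v; apply/implyP => vNs; rewrite !ffunE.
case: (eqVneq v x) => // vNx; apply: (implyP (agr v)).
by rewrite in_cons negb_or vNx.
Qed.

Lemma agree_off_cons x s th th0 t :
  agree_off s th (ffun_set th0 x t) -> agree_off (x :: s) th th0.
Proof.
move=> /forallP agr; apply/forallP => v; apply/implyP.
rewrite in_cons negb_or => /andP[vNx vNs].
by move/implyP: (agr v) => /(_ vNs); rewrite ffunE (negbTE vNx).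
Qed.

Variables (I : finType) (P : {set I}) (D : I -> {ffun X -> F} -> F).
Hypothesis D_multiaffine : forall p, multiaffine (D p).
Hypothesis card_P : (#|P| < #|F|)%N.

Definition nonzero_in_fiber (s : seq X) (th0 : {ffun X -> F}) (p : I) :=
  [exists th, agree_off s th th0 && (D p th != 0)].

(* Two bad values would be two zeros of the affine map [t |-> D p (ffun_set th x t)]. *)
Lemma fiber_bad_value_unique x s th0 p a b :
  nonzero_in_fiber (x :: s) th0 p ->
  ~~ nonzero_in_fiber s (ffun_set th0 x a) p ->
  ~~ nonzero_in_fiber s (ffun_set th0 x b) p -> a = b.
Proof.
move=> /existsP[th /andP[agr Dth]] bad_a bad_b; apply/eqP/negPn/negP => neq_ab.
have bad0 c : ~~ nonzero_in_fiber s (ffun_set th0 x c) p -> D p (ffun_set th x c) = 0.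
  move=> bad_c; apply/eqP; apply: contraNT bad_c => Dc.
  by apply/existsP; exists (ffun_set th x c); rewrite agree_off_set.
have := affine_eq0 (D_multiaffine p th x) neq_ab (bad0 a bad_a) (bad0 b bad_b) (th x).
by rewrite ffun_set_id => /eqP; rewrite (negbTE Dth).
Qed.

Lemma fiber_common_nonzero s th0 :
  (forall p, p \in P -> nonzero_in_fiber s th0 p) ->
  exists2 th, agree_off s th th0 & forall p, p \in P -> D p th != 0.
Proof.
elim: s th0 => [|x s IH] th0 good.
  exists th0; first by apply/forallP => v; rewrite eqxx implybT.
  move=> p /good /existsP[th /andP[/forallP agr Dth]].
  suff -> : th0 = th by [].
  by apply/ffunP => v; move/implyP: (agr v) => /(_ isT) /eqP.
pose bad p a := ~~ nonzero_in_fiber s (ffun_set th0 x a) p.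
pose Bad := [set a | [exists p in P, bad p a]].
have card_Bad : (#|Bad| <= #|P|)%N.
  apply: leq_trans (leq_imset_card (fun p => odflt 0 [pick a | bad p a]) P).
  apply/subset_leq_card/subsetP => a; rewrite inE => /exists_inP[p Pp bad_pa].
  apply/imsetP; exists p => //; case: pickP => [a' bad_pa'|/(_ a)]; last by rewrite bad_pa.
  exact: fiber_bad_value_unique (good p Pp) bad_pa bad_pa'.
have [a] : exists a, a \in ~: Bad.
  apply/card_gt0P; rewrite cardsCs setCK cardT -cardE subn_gt0.
  exact: leq_ltn_trans card_Bad card_P.
rewrite !inE => /exists_inPn good_a.
have [th agr Dth] := IH (ffun_set th0 x a) (fun p Pp => negbNE (good_a p Pp)).
by exists th => //; apply: agree_off_cons agr.
Qed.

Lemma multiaffine_common_nonzero :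
  (forall p, p \in P -> exists th, D p th != 0) ->
  exists th, forall p, p \in P -> D p th != 0.
Proof.
move=> nz; have [|th _ Dth] := @fiber_common_nonzero (enum X) [ffun => 0]; last by exists th.
move=> p /nz[th Dth]; apply/existsP; exists th; rewrite Dth andbT.
by apply/forallP => v; rewrite mem_enum.
Qed.

End CommonNonzero.

Section Flow.
Variables (V PI PO : finType) (inown : PI -> V) (outown : PO -> V) (F : fieldType)
  (Ef : {set PO * PI}).

Local Notation adj := (sn_adj inown outown Ef).

Definition relay r (b : PI -> PO -> F) (Y : PO -> 'rV[F]_r) (e : PO) : 'rV[F]_r :=
  \sum_(e' : PI | inown e' == outown e) b e' e *: in_sym Ef Y e'.

(* [flow b inj] solves [Y = relay b Y + inj]; [#|V|] rounds suffice in a DAG. *)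
Definition flow r b (inj : PO -> 'rV[F]_r) : PO -> 'rV[F]_r :=
  iter #|V| (fun Y e => relay b Y e + inj e) (fun _ => 0).

Lemma eq_in_sym r (Y Y' : PO -> 'rV[F]_r) : Y =1 Y' -> in_sym Ef Y =1 in_sym Ef Y'.
Proof. by move=> eqY e'; apply: eq_bigr => e _; rewrite eqY. Qed.

Lemma in_sym_affine r1 r2 (Y : PO -> 'rV[F]_r2) (Z : PO -> 'rV[F]_r1)
    (M : 'M[F]_(r1, r2)) t e' :
  in_sym Ef (fun e => Y e + t *: (Z e *m M)) e' =
  in_sym Ef Y e' + t *: (in_sym Ef Z e' *m M).
Proof. by rewrite /in_sym big_split /= mulmx_suml scaler_sumr. Qed.

Lemma sum_in_sym_affine r1 r2 (P : pred PI) (w : PI -> F)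
    (Y : PO -> 'rV[F]_r2) (Z : PO -> 'rV[F]_r1) (M : 'M[F]_(r1, r2)) t :
  \sum_(e' | P e') w e' *: in_sym Ef (fun e => Y e + t *: (Z e *m M)) e' =
  \sum_(e' | P e') w e' *: in_sym Ef Y e' +
    t *: ((\sum_(e' | P e') w e' *: in_sym Ef Z e') *m M).
Proof.
rewrite mulmx_suml scaler_sumr -big_split; apply: eq_bigr => e' _.
by rewrite in_sym_affine scalerDr -!scalemxAl !scalerA mulrC.
Qed.

Hypothesis acyc : acyclic_adt inown outown Ef.

Definition depth (v : V) := #|[set w | connect adj w v]|.

Lemma depth_lt u v : adj u v -> (depth u < depth v)%N.
Proof.
move=> uv; apply/proper_card/properP; split.
  by apply/subsetP => w; rewrite !inE => wu; apply: connect_trans wu (connect1 uv).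
by exists v; rewrite inE ?connect0 ?acyc.
Qed.

Lemma upstream_ind (Q : PO -> Prop) :
  (forall e, (forall e'', adj (outown e'') (outown e) -> Q e'') -> Q e) -> forall e, Q e.
Proof.
move=> IH; suff Qn n e : (depth (outown e) < n)%N -> Q e.
  by move=> e; apply: (Qn _ e (ltnSn _)).
elim: n e => [//|n IHn] e lt_e; apply: IH => e'' adj_e''.
exact/IHn/(leq_trans (depth_lt adj_e'') lt_e).
Qed.

Lemma eq_relay_upstream r b (Y Y' : PO -> 'rV[F]_r) e :
  (forall e'', adj (outown e'') (outown e) -> Y e'' = Y' e'') -> relay b Y e = relay b Y' e.
Proof.
move=> eqY; apply: eq_bigr => e' e'e; congr (_ *: _); apply: eq_bigr => e'' link.
by apply: eqY; apply/existsP; exists (e'', e'); rewrite link /= eqxx e'e.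
Qed.

Lemma flow_fixed r b (inj : PO -> 'rV[F]_r) e : flow b inj e = relay b (flow b inj) e + inj e.
Proof.
set step := fun Y e => relay b Y e + inj e.
suff stable m e' : (depth (outown e') <= m)%N ->
    iter m step (fun _ => 0) e' = iter m.+1 step (fun _ => 0) e'.
  by rewrite /flow -/step stable ?max_card.
elim: m e' => [|m IH] e' le_e'.
  suff : (0 < depth (outown e'))%N by rewrite ltnNge le_e'.
  by apply/card_gt0P; exists (outown e'); rewrite inE connect0.
rewrite !iterS {1}/step; congr (_ + _); apply: eq_relay_upstream => e'' adj_e''.
by apply: IH; rewrite -ltnS (leq_trans (depth_lt adj_e'') le_e').
Qed.

Lemma flow_unique r b (inj : PO -> 'rV[F]_r) Y :
  (forall e, Y e = relay b Y e + inj e) -> Y =1 flow b inj.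
Proof.
move=> fixY; apply: upstream_ind => e IH; rewrite fixY flow_fixed; congr (_ + _).
exact: eq_relay_upstream.
Qed.

Lemma flow_affine r1 r2 b (inj inj' : PO -> 'rV[F]_r2) (s : PO -> 'rV[F]_r1)
    (M : 'M[F]_(r1, r2)) t :
  inj' =1 (fun e => inj e + t *: (s e *m M)) ->
  flow b inj' =1 (fun e => flow b inj e + t *: (flow b s e *m M)).
Proof.
move=> eq_inj e; symmetry.
apply: (flow_unique (Y := fun e => flow b inj e + t *: (flow b s e *m M))) => {}e.
by rewrite /relay sum_in_sym_affine (flow_fixed b inj) (flow_fixed b s) eq_inj
  mulmxDl scalerDr addrACA.
Qed.

Lemma flow_off_downstream r b (inj : PO -> 'rV[F]_r) v0 :
  (forall e, ~~ connect adj v0 (outown e) -> inj e = 0) ->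
  forall e, ~~ connect adj v0 (outown e) -> flow b inj e = 0.
Proof.
move=> inj0; apply: upstream_ind => e IH e_off.
rewrite flow_fixed inj0 // addr0 /relay big1 // => e' e'e.
rewrite /in_sym big1 ?scaler0 // => e'' link.
have adj_e'' : adj (outown e'') (outown e).
  by apply/existsP; exists (e'', e'); rewrite link /= eqxx e'e.
apply: IH => //; apply: contra e_off => v0e''.
exact: connect_trans v0e'' (connect1 adj_e'').
Qed.

End Flow.

Section Perturbation.
Variables (V PI PO : finType) (inown : PI -> V) (outown : PO -> V) (F : fieldType)
  (r N : nat) (S : V) (T : 'I_N -> V) (Ef : {set PO * PI}).

Local Notation code := (lcode PI PO F r N).
Local Notation out_sym c := (out_sym inown outown S c Ef).
Local Notation sysmx c i := (sysmx inown outown S T c Ef i).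
Local Notation relay := (relay inown outown Ef).
Local Notation flow := (flow inown outown Ef).

Definition source_inj (al : 'I_r -> PO -> F) (e : PO) : 'rV[F]_r :=
  if outown e == S then \row_k al k e else 0.

Lemma out_symE (c : code) : out_sym c = flow (beta c) (source_inj (alpha c)).
Proof. by []. Qed.

Definition unit_inj (e0 e : PO) : 'rV[F]_1 := (e == e0)%:R%:M.

Definition set_alpha (c : code) k0 e0 t : code :=
  LCode (fun k e => if (e == e0) && (k == k0) then t else alpha c k e) (beta c) (eps c).

Definition set_beta (c : code) e'0 e0 t : code :=
  LCode (alpha c) (fun e' e => if (e == e0) && (e' == e'0) then t else beta c e' e) (eps c).

Definition set_eps (c : code) i0 e'0 k0 t : code :=
  LCode (alpha c) (beta c)
    (fun i e' k => if (i == i0) && (k == k0) && (e' == e'0) then t else eps c i e' k).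

Lemma sysmx_rank1_pencil (C : F -> code) (g : PO -> 'rV[F]_1) (y : 'rV[F]_r) i :
  (forall t, eps (C t) = eps (C 0)) ->
  (forall t e, out_sym (C t) e = out_sym (C 0) e + t *: (g e *m y)) ->
  rank1_pencil (fun t => sysmx (C t) i).
Proof.
move=> epsC outC.
pose h k := \sum_(e' | inown e' == T i) eps (C 0) i e' k *: in_sym Ef g e'.
exists y^T, (\row_k h k 0 0) => t; apply/matrixP => j k.
rewrite /Defs.sysmx !mxE /dest_out epsC.
under eq_bigr do rewrite (eq_in_sym Ef (outC t)).
rewrite sum_in_sym_affine -/(h k) mxE [in LHS]mxE; congr (_ + t * _).
by rewrite !mxE !big_ord1 !mxE mulrC.
Qed.

Lemma set_eps_rank1 c i0 e'0 k0 i : rank1_pencil (fun t => sysmx (set_eps c i0 e'0 k0 t) i).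
Proof.
set y := in_sym Ef (out_sym c) e'0.
exists y^T, (\row_k ((i == i0) && (k == k0) && (inown e'0 == T i))%:R) => t.
have out_eps t' : out_sym (set_eps c i0 e'0 k0 t') = out_sym c by [].
apply/matrixP => j k; rewrite /Defs.sysmx !mxE /dest_out !out_eps big_scale_set mxE.
congr (_ + _); rewrite big_ord1 !mxE.
by case: (_ && _ && _); rewrite ?mxE ?mulr1 ?mulr0 // mulrC.
Qed.

Hypothesis acyc : acyclic_adt inown outown Ef.

Lemma set_alpha_rank1 c k0 e0 i : rank1_pencil (fun t => sysmx (set_alpha c k0 e0 t) i).
Proof.
pose y : 'rV[F]_r := if outown e0 == S then delta_mx 0 k0 else 0.
apply: (@sysmx_rank1_pencil _ (flow (beta c) (unit_inj e0)) y) => // t.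
apply: flow_affine => // e; rewrite /source_inj /unit_inj /y mul_scalar_mx /=.
have [-> | neq] := eqVneq e e0; last by rewrite scale0r scaler0 addr0.
case: (outown e0 == S); last by rewrite !scaler0 addr0.
apply/matrixP => l k; rewrite scale1r !mxE (ord1 l) eqxx /=.
by case: (k == k0); rewrite ?mulr1 ?mulr0 ?add0r ?addr0.
Qed.

Lemma relay_set_beta b e'0 e0 t (Y : PO -> 'rV[F]_r) e :
  relay (fun e' e => if (e == e0) && (e' == e'0) then t else b e' e) Y e =
  relay (fun e' e => if (e == e0) && (e' == e'0) then 0 else b e' e) Y e +
  t *: (unit_inj e0 e *m (if inown e'0 == outown e0 then in_sym Ef Y e'0 else 0)).
Proof.
rewrite /relay big_scale_set mul_scalar_mx; congr (_ + _).
have [-> | neq] := eqVneq e e0; last by rewrite scale0r scaler0.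
by rewrite scale1r /=; case: ifP; rewrite ?scaler0.
Qed.

Lemma in_sym_flow_unit_upstream b e'0 e0 :
  inown e'0 == outown e0 -> in_sym Ef (flow b (unit_inj e0)) e'0 = 0.
Proof.
move=> e'0e0; rewrite /in_sym big1 // => e link.
apply: (@flow_off_downstream _ _ _ _ _ _ _ acyc _ b _ (outown e0)) => [e1|].
  rewrite /unit_inj; case: (eqVneq e1 e0) => [-> | _ _]; first by rewrite connect0.
  exact: raddf0.
have adj_e : sn_adj inown outown Ef (outown e) (outown e0).
  by apply/existsP; exists (e, e'0); rewrite link /= eqxx e'0e0.
exact: acyc adj_e.
Qed.

(* Raising [beta_(e'0, e0)] to [t] injects [t Y(e'0)] at [e0]; by acyclicity [Y(e'0)]
   does not see this injection, so every symbol changes by [t g y]. *)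
Lemma set_beta_rank1 c e'0 e0 i : rank1_pencil (fun t => sysmx (set_beta c e'0 e0 t) i).
Proof.
set b0 := beta (set_beta c e'0 e0 0).
set src := source_inj (alpha c).
set g := flow b0 (unit_inj e0).
pose y := if inown e'0 == outown e0 then in_sym Ef (flow b0 src) e'0 else 0.
apply: (@sysmx_rank1_pencil _ g y) => // t.
pose inj_t e := src e + t *: (unit_inj e0 e *m y).
have flow_t : flow b0 inj_t =1 (fun e => flow b0 src e + t *: (g e *m y)).
  exact: flow_affine.
have y_t : (if inown e'0 == outown e0 then in_sym Ef (flow b0 inj_t) e'0 else 0) = y.
  rewrite /y; case: ifP => // e'0e0.
  rewrite (eq_in_sym Ef flow_t) in_sym_affine in_sym_flow_unit_upstream //.
  by rewrite mul0mx scaler0 addr0.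
move=> e; rewrite !out_symE /= -/src -/b0 -flow_t; symmetry; move: e.
apply: (flow_unique acyc) => e.
rewrite relay_set_beta -/b0 y_t {1}(flow_fixed acyc b0 inj_t) /inj_t.
by rewrite -addrA [_ + src e]addrC.
Qed.

End Perturbation.

Section CodeCoordinates.
Variables (V PI PO : finType) (inown : PI -> V) (outown : PO -> V) (F : fieldType)
  (r N : nat) (S : V) (T : 'I_N -> V) (Ef : {set PO * PI}).

Local Notation code := (lcode PI PO F r N).

Definition code_coord := (('I_r * PO) + (PI * PO) + ('I_N * PI * 'I_r))%type.

Definition code_of (th : {ffun code_coord -> F}) : code :=
  LCode (fun k e => th (inl (inl (k, e)))) (fun e' e => th (inl (inr (e', e))))
    (fun i e' k => th (inr (i, e', k))).

Definition coords_of (c : code) : {ffun code_coord -> F} :=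
  [ffun x => match x with
   | inl (inl (k, e)) => alpha c k e
   | inl (inr (e', e)) => beta c e' e
   | inr (i, e', k) => eps c i e' k end].

Lemma coords_ofK : cancel coords_of code_of.
Proof.
case=> al be ep; rewrite /code_of; congr LCode;
  by do ! apply: functional_extensionality => ?; rewrite ffunE.
Qed.

Definition set_coord (c : code) (x : code_coord) (t : F) : code :=
  match x with
  | inl (inl (k0, e0)) => set_alpha c k0 e0 t
  | inl (inr (e'0, e0)) => set_beta c e'0 e0 t
  | inr (i0, e'0, k0) => set_eps c i0 e'0 k0 t
  end.

Lemma code_of_set th x t : code_of (ffun_set th x t) = set_coord (code_of th) x t.
Proof.
case: x => [[[k0 e0] | [e'0 e0]] | [[i0 e'0] k0]]; rewrite /code_of /=; congr LCode;
  do ! apply: functional_extensionality => ?;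
  rewrite ffunE -!sum_eqE /= -?sum_eqE /= ?xpair_eqE //; by [rewrite andbC | rewrite andbAC].
Qed.

Hypothesis acyc : acyclic_adt inown outown Ef.

Lemma set_coord_rank1 c x i :
  rank1_pencil (fun t => sysmx inown outown S T (set_coord c x t) Ef i).
Proof.
case: x => [[[k0 e0] | [e'0 e0]] | [[i0 e'0] k0]].
- exact: set_alpha_rank1.
- exact: set_beta_rank1.
- exact: set_eps_rank1.
Qed.

Lemma det_sysmx_multiaffine i :
  multiaffine (fun th => \det (sysmx inown outown S T (code_of th) Ef i)).
Proof.
move=> th x; have [a [b det_ab]] := det_rank1_pencil_affine (set_coord_rank1 (code_of th) x i).
by exists a, b => t; rewrite code_of_set det_ab.
Qed.

End CodeCoordinates.

Lemma acyclic_Gf (V PI PO : finType) (inown : PI -> V) (outown : PO -> V)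
    (E f : {set PO * PI}) :
  acyclic_adt inown outown E -> acyclic_adt inown outown (Gf E f).
Proof.
move=> acyc u v.
have sub : subrel (sn_adj inown outown (Gf E f)) (sn_adj inown outown E).
  move=> a b /exists_inP[p]; rewrite inE => /andP[_ Ep] ends.
  by apply/exists_inP; exists p.
move=> /sub /acyc; apply: contra; apply: connect_sub => a b /sub.
exact: connect1.
Qed.

Theorem theorem9 (V PI PO : finType) (inown : PI -> V) (outown : PO -> V)
    (E : {set PO * PI}) (S : V) (r N : nat) (T : 'I_N -> V) (F : finFieldType)
    (Fam : {set {set PO * PI}}) :
  well_formed_adt inown outown E ->
  acyclic_adt inown outown E ->
  (forall f : {set PO * PI},
     f \in Fam <-> (f \subset E /\ solvable inown outown F r S T E f)) ->
  (#|Fam| * N < #|F|)%N ->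
  exists c : lcode PI PO F r N,
    forall f, f \in Fam -> solves inown outown S T c E f.
Proof.
move=> _ acyc Fam_solvable card_F.
pose D (p : {set PO * PI} * 'I_N) (th : {ffun code_coord PI PO r N -> F}) :=
  \det (sysmx inown outown S T (code_of th) (Gf E p.1) p.2).
have [|||th D_nz] := @multiaffine_common_nonzero _ F _ (setX Fam setT) D.
- by move=> [f i]; apply/det_sysmx_multiaffine/acyclic_Gf.
- by rewrite cardsX cardsT card_ord.
- move=> [f i]; rewrite inE => /andP[/Fam_solvable[_ [c sol_c]] _].
  by exists (coords_of c); rewrite /D coords_ofK sol_c det1 oner_neq0.
exists (code_of th) => f Ff i; rewrite unitmxE unitfE.
by apply: (D_nz (f, i)); rewrite inE Ff inE.
Qed.
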